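(* Let $T\geq 3$ be an integer, $L>0$, $D>0$, and let $\mathcal{K}\subset\mathbb{R}^d$ be a nonempty closed convex set with diameter at most $D$. For $t=1,\dots,T$ let $\ell_t(x)=\langle g_t,x\rangle$ be linear cost functions with $\|g_t\|\leq L$. Set $$\eta=\frac{D}{2L}\left(\frac{3}{T}\right)^{3/4},\qquad \sigma=\min\left(1,\sqrt{\frac{3}{T}}\right).$$ Let $x_1\in\mathcal{K}$ and define the Online Frank--Wolfe iterates: for $t=1,\dots,T$, $\mathrm{dir}_t=\eta\sum_{s=1}^t g_s+(x_t-x_1)$, $v_t\in\arg\min_{v\in\mathcal{K}}\langle\mathrm{dir}_t,v\rangle$, $x_{t+1}=(1-\sigma)x_t+\sigma v_t$. Define the Follow-The-Regularized-Leader iterates $y_1=x_1$ and, for $t=1,\dots,T$, $$y_{t+1}=\arg\min_{y\in\mathcal{K}}\ \eta\Big\langle\sum_{s=1}^t g_s,y\Big\rangle+\frac12\|y-x_1\|^2.$$ For $0\leq t\leq T$ define the potential $$\phi_t\triangleq\sum_{s=1}^t\langle g_s,x_s-y_{t+1}\rangle+\frac{1}{6\eta}\|x_{t+1}-y_{t+1}\|^2-\frac{1}{2\eta}\|y_{t+1}-x_1\|^2.$$ Then for every $t\in\{1,\dots,T\}$, $$\phi_t-\phi_{t-1}\leq\frac{2D}{L\,3^{3/4}T^{1/4}}\|g_t\|^2+\frac{L}{D\,3^{3/4}T^{1/4}}\|x_t-v_t\|^2.$$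
   Context: $\|\cdot\|$ is the Euclidean norm; $v_t$ is any minimizer of the linear function over $\mathcal{K}$ (the output of a linear optimization oracle). The FTRL minimizer is unique by strong convexity. *)

From HB Require Import structures.
From mathcomp Require Import all_boot all_order all_algebra.
From mathcomp Require Import all_classical all_reals all_analysis.
From mathcomp Require Import matrix_topology matrix_normedtype.
Import numFieldNormedType.Exports.
Set Implicit Arguments. Unset Strict Implicit. Unset Printing Implicit Defensive.
Import Order.TTheory GRing.Theory Num.Theory.
Local Open Scope classical_set_scope.
Local Open Scope ring_scope.

Definition dotv (R : realType) (d : nat) (u v : 'rV[R]_d) : R :=
  \sum_(i < d) u ord0 i * v ord0 i.
Definition enorm (R : realType) (d : nat) (u : 'rV[R]_d) : R :=
  Num.sqrt (dotv u u).

Definition diam_le (R : realType) (d : nat) (K : set 'rV[R]_d) (D : R) : Prop :=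
  forall a b, K a -> K b -> enorm (a - b) <= D.

Definition is_argmin (R : realType) (d : nat) (K : set 'rV[R]_d)
  (f : 'rV[R]_d -> R) (z : 'rV[R]_d) : Prop :=
  K z /\ forall w, K w -> f z <= f w.

Definition gsum (R : realType) (d : nat) (g : nat -> 'rV[R]_d) (t : nat) : 'rV[R]_d :=
  \sum_(1 <= s < t.+1) g s.

Definition phi (R : realType) (d : nat) (eta : R) (g x y : nat -> 'rV[R]_d) (t : nat) : R :=
  \sum_(1 <= s < t.+1) dotv (g s) (x s - y t.+1)
  + (6 * eta)^-1 * enorm (x t.+1 - y t.+1) ^+ 2
  - (2 * eta)^-1 * enorm (y t.+1 - x 1%N) ^+ 2.

From HB Require Import structures.
From mathcomp Require Import all_boot all_order all_algebra.
From mathcomp Require Import all_classical all_reals all_analysis.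
From mathcomp Require Import matrix_topology matrix_normedtype.
From mathcomp Require Import ring lra.
Import numFieldNormedType.Exports.
Set Implicit Arguments. Unset Strict Implicit. Unset Printing Implicit Defensive.
Import Order.TTheory GRing.Theory Num.Theory.
Local Open Scope classical_set_scope.
Local Open Scope ring_scope.

(* The FTRL variational inequalities at y_t
   and y_{t+1} make the regularizer terms telescope and give the stability bound
   |y_{t+1} - y_t| <= eta |g_t|. The OFW direction differs from the FTRL gradient
   at y_{t+1} by x_t - y_{t+1}, so optimality of v_t and of y_{t+1} together give
   |x_t - y_{t+1}|^2 <= <x_t - y_{t+1}, x_t - v_t>. After these three facts, the
   increment bound is a sum-of-squares inequality in the inner products. *)

Section DotProduct.
Variables (R : realType) (d : nat).
Implicit Types (u v w : 'rV[R]_d) (a : R).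

Lemma dotvC u v : dotv u v = dotv v u.
Proof. by apply: eq_bigr => i _; rewrite mulrC. Qed.

Lemma dotvDl u v w : dotv (u + v) w = dotv u w + dotv v w.
Proof. by rewrite /dotv -big_split; apply: eq_bigr => i _; rewrite mxE mulrDl. Qed.

Lemma dotvDr u v w : dotv w (u + v) = dotv w u + dotv w v.
Proof. by rewrite dotvC dotvDl !(dotvC w). Qed.

Lemma dotvZl a u w : dotv (a *: u) w = a * dotv u w.
Proof. by rewrite /dotv mulr_sumr; apply: eq_bigr => i _; rewrite mxE mulrA. Qed.

Lemma dotvZr a u w : dotv w (a *: u) = a * dotv w u.
Proof. by rewrite dotvC dotvZl dotvC. Qed.

Lemma dotvNl u w : dotv (- u) w = - dotv u w.
Proof. by rewrite -scaleN1r dotvZl mulN1r. Qed.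

Lemma dotvNr u w : dotv w (- u) = - dotv w u.
Proof. by rewrite dotvC dotvNl dotvC. Qed.

Lemma dotvBr u v w : dotv w (u - v) = dotv w u - dotv w v.
Proof. by rewrite dotvDr dotvNr. Qed.

Lemma dotv0l w : dotv 0 w = 0.
Proof. by rewrite /dotv big1 // => i _; rewrite mxE mul0r. Qed.

Lemma dotv_ge0 u : 0 <= dotv u u.
Proof. by rewrite sumr_ge0 // => i _; rewrite -expr2 sqr_ge0. Qed.

Lemma enorm_sqr u : enorm u ^+ 2 = dotv u u.
Proof. by rewrite sqr_sqrtr // dotv_ge0. Qed.

Lemma dotv_suml (I : Type) (r : seq I) (P : pred I) (F : I -> 'rV[R]_d) w :
  \sum_(i <- r | P i) dotv (F i) w = dotv (\sum_(i <- r | P i) F i) w.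
Proof. by rewrite (big_morph (fun u => dotv u w) (fun u v => dotvDl u v w) (dotv0l w)). Qed.

End DotProduct.

Lemma convex_set_comb (R : realType) (d : nat) (K : set 'rV[R]_d) a b (l : R) :
  convex.convex_set K -> K a -> K b -> 0 <= l <= 1 -> K (l *: a + (1 - l) *: b).
Proof.
move=> cK Ka Kb l01.
have l01' : Itv.spec (@Itv.num_sem R) (Itv.Real `[0%Z, 1%Z]) l.
  by rewrite /Itv.spec /Itv.num_sem /= in_itv /= l01 num_real.
by have := cK a b (Itv.mk l01'); rewrite !inE; apply.
Qed.

Lemma ge0_small_perturbation (R : realFieldType) (a b : R) :
  (forall l, 0 < l <= 1 -> 0 <= a + l * b) -> 0 <= a.
Proof.
move=> H; rewrite leNgt; apply/negP => a0.
pose l := Num.min 1 (- a / (`|b| + 1)).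
have b1 : 0 < `|b| + 1 by rewrite ltr_pwDr.
have l0 : 0 < l by rewrite lt_min ltr01 divr_gt0 // oppr_gt0.
have l1 : l <= 1 by rewrite ge_min lexx.
have lb : l * (`|b| + 1) <= - a by rewrite -ler_pdivlMr // ge_min lexx orbT.
have := H l; rewrite l0 l1 => /(_ isT).
have : l * b <= l * `|b| by rewrite ler_wpM2l ?ler_norm ?ltW.
nra.
Qed.

Lemma prox_argmin_variational (R : realType) (d : nat) (K : set 'rV[R]_d)
    (c : R) (G z y : 'rV[R]_d) :
  convex.convex_set K ->
  is_argmin K (fun w => c * dotv G w + 2^-1 * enorm (w - z) ^+ 2) y ->
  forall w, K w -> 0 <= dotv (c *: G + (y - z)) (w - y).
Proof.
move=> cK [Ky ymin] w Kw.
apply: (@ge0_small_perturbation _ _ (2^-1 * dotv (w - y) (w - y))) => l /andP[l0 l1].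
have Kz : K (l *: w + (1 - l) *: y) by apply: convex_set_comb; rewrite ?(ltW l0).
have := ymin _ Kz.
have -> : l *: w + (1 - l) *: y = y + l *: (w - y).
  by apply/rowP => i; rewrite !mxE; ring.
rewrite [y + _ - z]addrAC; move: (w - y) (y - z) => e f.
rewrite !enorm_sqr !(dotvDl, dotvDr, dotvZl, dotvZr) [dotv e f]dotvC.
nra.
Qed.

Section IncrementInequality.
Variables (R : realType) (d : nat) (eta sigma : R).
Hypotheses (eta_gt0 : 0 < eta) (sigma_gt0 : 0 < sigma).
Implicit Types G a g u w q : 'rV[R]_d.

Lemma ftrl_stability G a g w :
  0 <= dotv (eta *: G + a) w -> 0 <= dotv (eta *: (G + g) + (a + w)) (- w) ->
  dotv w w <= eta ^+ 2 * dotv g g.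
Proof.
have := dotv_ge0 (w + eta *: g).
rewrite !(dotvDl, dotvDr, dotvZl, dotvZr, dotvNr) [dotv g w]dotvC.
lra.
Qed.

Lemma increment_le_of_optimality G a g u w q :
  0 <= dotv (eta *: G + a) w -> dotv w w <= eta ^+ 2 * dotv g g ->
  dotv u u <= dotv u q ->
  dotv g u - dotv G w
    + (6 * eta)^-1 * (enorm (u - sigma *: q) ^+ 2 - enorm (u + w) ^+ 2)
    - (2 * eta)^-1 * (enorm (a + w) ^+ 2 - enorm a ^+ 2)
  <= 4 * eta / (3 * sigma) * enorm g ^+ 2 + sigma ^+ 2 / (6 * eta) * enorm q ^+ 2.
Proof.
move=> Gaw_ge0 ww_le uu_le.
have sqr1 := dotv_ge0 (eta *: g - (sigma / 2) *: u).
have sqr2 := dotv_ge0 ((sigma / 2) *: u + w).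
have := dotv_ge0 w.
move: Gaw_ge0 ww_le uu_le sqr1 sqr2; rewrite !enorm_sqr.
rewrite !(dotvDl, dotvDr, dotvZl, dotvZr, dotvNl, dotvNr).
rewrite [dotv u g]dotvC [dotv w u]dotvC [dotv q u]dotvC [dotv w a]dotvC.
set gg := dotv g g; set uu := dotv u u; set ww := dotv w w; set qq := dotv q q.
set gu := dotv g u; set uw := dotv u w; set uq := dotv u q.
set Gw := dotv G w; set aw := dotv a w.
move=> Gaw_ge0 ww_le uu_le sqr1 sqr2 ww_ge0.
have uq_uu : 0 <= uq - uu by rewrite subr_ge0.
pose P := 16 * eta ^+ 2 * gg - 12 * eta * sigma * gu + 12 * sigma * (eta * Gw + aw)
  + 4 * sigma ^+ 2 * uq + 4 * sigma * uw + 8 * sigma * ww.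
have P_ge0 : 0 <= P.
  (* [P = 12 sqr1 + 4 sqr2 + 12 sigma (eta Gw + aw) + 4 sigma^2 (uq - uu)
          + 8 sigma ww + 4 (eta^2 gg - ww)], a sum of nonnegative terms. *)
  have := mulr_ge0 (ltW sigma_gt0) Gaw_ge0.
  have := mulr_ge0 (sqr_ge0 sigma) uq_uu.
  have := mulr_ge0 (ltW sigma_gt0) ww_ge0.
  rewrite /P; lra.
rewrite -subr_ge0; set gap := (X in 0 <= X).
have -> : gap = (12 * eta * sigma)^-1 * P by rewrite /gap /P; field; rewrite !gt_eqF.
by rewrite mulr_ge0 // invr_ge0 !mulr_ge0 // ltW.
Qed.

End IncrementInequality.

Definition ftrl_objective (R : realType) (d : nat) (eta : R) (g : nat -> 'rV[R]_d)
    (z : 'rV[R]_d) (t : nat) (w : 'rV[R]_d) : R :=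
  eta * dotv (gsum g t) w + 2^-1 * enorm (w - z) ^+ 2.

Lemma ftrl_argmin0 (R : realType) (d : nat) (K : set 'rV[R]_d) eta g z :
  K z -> is_argmin K (@ftrl_objective R d eta g z 0) z.
Proof.
move=> Kz; split=> // w _.
rewrite /ftrl_objective /gsum big_geq // !dotv0l mulr0 !add0r subrr.
by rewrite enorm_sqr dotv0l mulr0 mulr_ge0 ?invr_ge0 ?sqr_ge0.
Qed.

Section OnlineFrankWolfeStep.
Variables (R : realType) (d : nat) (eta sigma : R) (g x v y : nat -> 'rV[R]_d).

Lemma phiS_subE s :
  phi eta g x y s.+1 - phi eta g x y s =
  dotv (g s.+1) (x s.+1 - y s.+2) - dotv (gsum g s) (y s.+2 - y s.+1)
  + (6 * eta)^-1 * (enorm (x s.+2 - y s.+2) ^+ 2 - enorm (x s.+1 - y s.+1) ^+ 2)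
  - (2 * eta)^-1 * (enorm (y s.+2 - x 1%N) ^+ 2 - enorm (y s.+1 - x 1%N) ^+ 2).
Proof.
have shift : \sum_(1 <= i < s.+1) dotv (g i) (x i - y s.+2)
    = \sum_(1 <= i < s.+1) dotv (g i) (x i - y s.+1) - dotv (gsum g s) (y s.+2 - y s.+1).
  rewrite /gsum -dotv_suml -sumrB; apply: eq_bigr => i _.
  by rewrite -dotvBr; congr dotv; apply/rowP => j; rewrite !mxE; ring.
rewrite /phi big_nat_recr //= shift; ring.
Qed.

Variable K : set 'rV[R]_d.
Hypotheses (convexK : convex.convex_set K) (eta_gt0 : 0 < eta) (sigma_gt0 : 0 < sigma).

Lemma phiS_sub_le s :
  is_argmin K (ftrl_objective eta g (x 1%N) s) (y s.+1) ->
  is_argmin K (ftrl_objective eta g (x 1%N) s.+1) (y s.+2) ->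
  is_argmin K (dotv (eta *: gsum g s.+1 + (x s.+1 - x 1%N))) (v s.+1) ->
  x s.+2 = (1 - sigma) *: x s.+1 + sigma *: v s.+1 ->
  phi eta g x y s.+1 - phi eta g x y s
    <= 4 * eta / (3 * sigma) * enorm (g s.+1) ^+ 2
       + sigma ^+ 2 / (6 * eta) * enorm (x s.+1 - v s.+1) ^+ 2.
Proof.
move=> ys ys1 [Kv v_min] xs.
have [[Ky _] [Ky1 _]] := (ys, ys1).
have F_var := prox_argmin_variational convexK ys1.
have gsumS : gsum g s.+1 = gsum g s + g s.+1 by rewrite /gsum big_nat_recr.
set G := gsum g s; set a := y s.+1 - x 1%N; set u := x s.+1 - y s.+2.
set w := y s.+2 - y s.+1; set q := x s.+1 - v s.+1.
set F := eta *: gsum g s.+1 + (y s.+2 - x 1%N) in F_var.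
have FE : F = eta *: (G + g s.+1) + (a + w).
  by rewrite /F gsumS; congr (_ + _); apply/rowP => i; rewrite !mxE; ring.
have a_var : 0 <= dotv (eta *: G + a) w := prox_argmin_variational convexK ys Ky1.
have stable : dotv w w <= eta ^+ 2 * dotv (g s.+1) (g s.+1).
  apply: (ftrl_stability (g := g s.+1) a_var); rewrite -FE (_ : - w = y s.+1 - y s.+2).
    exact: F_var Ky.
  by rewrite opprB.
have uu_le : dotv u u <= dotv u q.
  have vy : v s.+1 - y s.+2 = u - q by apply/rowP => i; rewrite !mxE; ring.
  have := F_var _ Kv; have := v_min _ Ky1.
  have -> : eta *: gsum g s.+1 + (x s.+1 - x 1%N) = F + u.
    by apply/rowP => i; rewrite !mxE; ring.
  rewrite -subr_ge0 -dotvBr vy dotvDl !dotvBr; lra.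
rewrite phiS_subE xs.
have -> : (1 - sigma) *: x s.+1 + sigma *: v s.+1 - y s.+2 = u - sigma *: q.
  by apply/rowP => i; rewrite !mxE; ring.
have -> : x s.+1 - y s.+1 = u + w by rewrite /u /w addrA addrNK.
have -> : y s.+2 - x 1%N = a + w by rewrite /a /w [RHS]addrC addrA addrNK.
exact (increment_le_of_optimality eta_gt0 sigma_gt0 a_var stable uu_le).
Qed.

End OnlineFrankWolfeStep.

Lemma quarter_root_powers (R : realType) (T : nat) : (0 < T)%N ->
  let p := (3 / T%:R : R) `^ 4^-1 in
  [/\ 0 < p, p ^+ 4 = 3 / T%:R, (3 / T%:R) `^ (3 / 4) = p ^+ 3,
      Num.sqrt (3 / T%:R) = p ^+ 2 &
      3 `^ (3 / 4) * T%:R `^ (1 / 4) = p ^+ 3 * T%:R].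
Proof.
move=> T_gt0 p.
have T0 : (0 : R) < T%:R by rewrite ltr0n.
have r0 : (0 : R) < 3 / T%:R by rewrite divr_gt0.
have pn n : p ^+ n = (3 / T%:R) `^ (4^-1 * n%:R) by rewrite powRrM powR_mulrn ?powR_ge0.
have p3 : (3 / T%:R) `^ (3 / 4) = p ^+ 3 by rewrite pn; congr (_ `^ _); field.
split=> //.
- by rewrite powR_gt0.
- by rewrite pn mulVf ?powRr1 ?ltW ?pnatr_eq0.
- by rewrite pn -powR12_sqrt ?ltW //; congr (_ `^ _); field.
have -> : (3 : R) `^ (3 / 4) = (3 / T%:R * T%:R) `^ (3 / 4) by rewrite divfK ?gt_eqF.
rewrite powRM ?ltW // p3 -mulrA -powRD; last by rewrite gt_eqF ?orbT.
by rewrite (_ : 3 / 4 + 1 / 4 = 1 :> R) ?powRr1 ?ltW //; field.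
Qed.

Lemma ofw_parameters (R : realType) (T : nat) (L D eta sigma : R) :
  (3 <= T)%N -> 0 < L -> 0 < D ->
  eta = D / (2 * L) * (3 / T%:R) `^ (3 / 4) ->
  sigma = Num.min 1 (Num.sqrt (3 / T%:R)) ->
  [/\ 0 < eta, 0 < sigma,
      4 * eta / (3 * sigma) = 2 * D / (L * 3 `^ (3 / 4) * T%:R `^ (1 / 4)) &
      sigma ^+ 2 / (6 * eta) = L / (D * 3 `^ (3 / 4) * T%:R `^ (1 / 4))].
Proof.
move=> T3 L0 D0 -> ->.
have T_gt0 : (0 < T)%N by apply: leq_trans T3.
have [p0 p4 -> -> pT] := quarter_root_powers R T_gt0.
set p := (3 / T%:R) `^ 4^-1 in p0 p4 pT *.
have -> : Num.min 1 (p ^+ 2) = p ^+ 2.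
  apply/min_idPr; rewrite -(@expr_le1 _ 2) ?sqr_ge0 // -exprM p4.
  by rewrite ler_pdivrMr ?ltr0n // mul1r ler_nat.
have TE : T%:R = 3 / p ^+ 4 by rewrite p4 invf_div mulrC divfK ?gt_eqF.
rewrite -[L * 3 `^ _ * _]mulrA -[D * 3 `^ _ * _]mulrA pT TE.
split; last 2 first; try by field; rewrite !gt_eqF.
  by rewrite !mulr_gt0 ?invr_gt0 ?mulr_gt0 ?exprn_gt0.
exact: exprn_gt0.
Qed.

Theorem lemma1 (R : realType) (d T : nat) (L D : R) (K : set 'rV[R]_d)
  (g x v y : nat -> 'rV[R]_d) :
  (3 <= T)%N -> 0 < L -> 0 < D ->
  closed K -> convex.convex_set K -> diam_le K D ->
  (forall t, (1 <= t <= T)%N -> enorm (g t) <= L) ->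
  let eta := D / (2 * L) * (3 / T%:R) `^ (3 / 4) in
  let sigma := Num.min 1 (Num.sqrt (3 / T%:R)) in
  K (x 1%N) ->
  (forall t, (1 <= t <= T)%N ->
     is_argmin K (fun w => dotv (eta *: gsum g t + (x t - x 1%N)) w) (v t)) ->
  (forall t, (1 <= t <= T)%N -> x t.+1 = (1 - sigma) *: x t + sigma *: v t) ->
  y 1%N = x 1%N ->
  (forall t, (1 <= t <= T)%N ->
     is_argmin K (fun w => eta * dotv (gsum g t) w + 2^-1 * enorm (w - x 1%N) ^+ 2)
       (y t.+1)) ->
  forall t, (1 <= t <= T)%N ->
    phi eta g x y t - phi eta g x y t.-1 <=
      2 * D / (L * 3 `^ (3 / 4) * T%:R `^ (1 / 4)) * enorm (g t) ^+ 2
      + L / (D * 3 `^ (3 / 4) * T%:R `^ (1 / 4)) * enorm (x t - v t) ^+ 2.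
Proof.
move=> T3 L0 D0 _ convexK _ _ eta sigma Kx1 v_min x_step y1 y_min [//|s] /andP[_ sT].
have [eta_gt0 sigma_gt0 <- <-] := ofw_parameters T3 L0 D0 (erefl eta) (erefl sigma).
have ftrl_min t : (t <= T)%N -> is_argmin K (ftrl_objective eta g (x 1%N) t) (y t.+1).
  by case: t => [_|t tT]; [rewrite y1; apply: ftrl_argmin0 | apply: y_min].
apply: (phiS_sub_le convexK) => //.
- exact: ftrl_min (ltnW sT).
- exact: ftrl_min.
- exact: v_min.
- exact: x_step.
Qed.
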